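(* Let $X,Y$ be $\mathfrak{Q}$-preordered $\mathfrak{Q}$-subsets and $f\colon\mathsf{P}X\to\mathsf{P}Y$ a $\mathfrak{Q}$-order-preserving map. The following are equivalent: (i) $f$ is a left adjoint in $\mathfrak{Q}\text{-}\mathbf{FOrd}$, i.e. there is a $\mathfrak{Q}$-order-preserving $g\colon\mathsf{P}Y\to\mathsf{P}X$ with $f\dashv g$ (a $\mathfrak{Q}$-axiality from $X$ to $Y$); (ii) $f$ is a left adjoint between the underlying preordered sets of $\mathsf{P}X$ and $\mathsf{P}Y$, and $f(u\circ\mu)=u\circ f\mu$ for all $\mu\in\mathsf{P}X$, $q\in\mathfrak{Q}$ and $u\in\mathcal{D}\mathfrak{Q}(|\mu|,q)$; (iii) $f$ is a left adjoint between the underlying preordered sets of $\mathsf{P}X$ and $\mathsf{P}Y$, and $f(u\circ\mathsf{y}_X x)=u\circ f\mathsf{y}_X x$ for all $x\in X$, $q\in\mathfrak{Q}$ and $u\in\mathcal{D}\mathfrak{Q}(|x|,q)$.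
   Context: $(\mathfrak{Q},\&,e)$ is a non-trivial unital quantale (complete lattice with associative multiplication with unit $e$ preserving joins in each variable, $\bot<e$), implications $p\& q\le r\iff p\le r/ q\iff q\le p\backslash r$, and $\mathcal{D}\mathfrak{Q}(p,q)=\{u\mid (u/ p)\& p=u=q\&(q\backslash u)\}$. A $\mathfrak{Q}$-subset is a set $X$ with $|\cdot|\colon X\to\mathfrak{Q}$; $\mathbf{1}_q$ is the singleton $\{*\}$ with $|*|=q$, and $u\in\mathcal{D}\mathfrak{Q}(p,q)$ is identified with the $\mathfrak{Q}$-relation from $\mathbf{1}_p$ to $\mathbf{1}_q$ with value $u$. A $\mathfrak{Q}$-relation from $X$ to $Y$ is a map $\phi\colon X\times Y\to\mathfrak{Q}$ with $\phi(x,y)\in\mathcal{D}\mathfrak{Q}(|x|,|y|)$, ordered pointwise; composition $(\psi\circ\phi)(x,z)=\bigvee_y(\psi(y,z)/|y|)\&\phi(x,y)$; $\xi\swarrow\phi$ is the largest $\psi'$ with $\psi'\circ\phi\le\xi$, and $\psi\searrow\xi$ the largest $\phi'$ with $\psi\circ\phi'\le\xi$. $\mathrm{id}_X(x,x)=|x|$, $\bot$ elsewhere. A $\mathfrak{Q}$-preordered $\mathfrak{Q}$-subset is a $\mathfrak{Q}$-subset $X$ with a $\mathfrak{Q}$-relation $1_X^{\natural}$ from $X$ to $X$ satisfying $\mathrm{id}_X\le 1_X^{\natural}$ and $1_X^{\natural}\circ 1_X^{\natural}\le 1_X^{\natural}$; its underlying preorder is $x\le y\iff |x|=|y|$ and $|x|\le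 1_X^{\natural}(x,y)$. A $\mathfrak{Q}$-order-preserving map $f\colon X\to Y$ satisfies $|fx|=|x|$ and $1_X^{\natural}(x,x')\le 1_Y^{\natural}(fx,fx')$; for such $f,g\colon X\to Y$, $f\le g$ means $|x|\le 1_Y^{\natural}(fx,gx)$ for all $x$. A $\mathfrak{Q}$-Galois connection $f\dashv g$ ($f\colon X\to Y$, $g\colon Y\to X$ $\mathfrak{Q}$-order-preserving) means $1_X\le gf$ and $fg\le 1_Y$; $\mathfrak{Q}\text{-}\mathbf{FOrd}$ is the category of $\mathfrak{Q}$-preordered $\mathfrak{Q}$-subsets and $\mathfrak{Q}$-order-preserving maps. The $\mathfrak{Q}$-powerset $\mathsf{P}X$ is the $\mathfrak{Q}$-subset of all potential lower $\mathfrak{Q}$-subsets, i.e. $\mathfrak{Q}$-relations $\mu$ from $X$ to some $\mathbf{1}_q$ with $\mu\circ 1_X^{\natural}\le\mu$, with $|\mu|=q$ and $\mathfrak{Q}$-preorder $1_{\mathsf{P}X}^{\natural}(\mu,\mu')=\mu'\swarrow\mu$. The Yoneda embedding $\mathsf{y}_X\colon X\to\mathsf{P}X$ sends $x$ to $1_X^{\natural}(-,x)$, a $\mathfrak{Q}$-relation from $X$ to $\mathbf{1}_{|x|}$. *)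

Set Implicit Arguments.
Unset Strict Implicit.

Record Quantale := {
  qcar :> Type;
  qle : qcar -> qcar -> Prop;
  qle_refl : forall a, qle a a;
  qle_trans : forall a b c, qle a b -> qle b c -> qle a c;
  qle_antisym : forall a b, qle a b -> qle b a -> a = b;
  qsup : (qcar -> Prop) -> qcar;
  qsup_ub : forall (S : qcar -> Prop) a, S a -> qle a (qsup S);
  qsup_least : forall (S : qcar -> Prop) b,
      (forall a, S a -> qle a b) -> qle (qsup S) b;
  qmul : qcar -> qcar -> qcar;
  qe : qcar;
  qmulA : forall a b c, qmul a (qmul b c) = qmul (qmul a b) c;
  qmul1l : forall a, qmul qe a = a;
  qmulr1 : forall a, qmul a qe = a;
  qmul_supl : forall (S : qcar -> Prop) b,
      qmul (qsup S) b = qsup (fun c => exists a, S a /\ c = qmul a b);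
  qmul_supr : forall a (S : qcar -> Prop),
      qmul a (qsup S) = qsup (fun c => exists b, S b /\ c = qmul a b);
  qnontrivial : qsup (fun _ => False) <> qe
}.

Section QDefs.
Variable Q : Quantale.

Definition qbot : Q := qsup (fun _ => False).

Definition qrdiv (r q : Q) : Q := qsup (fun p => qle (qmul p q) r).
Definition qldiv (p r : Q) : Q := qsup (fun q => qle (qmul p q) r).

Definition inDQ (u p q : Q) : Prop :=
  qmul (qrdiv u p) p = u /\ u = qmul q (qldiv q u).

(* A Q-subset (carrier with |.|) together with a Q-relation [qrel]
   from X to X (values in DQ(|x|,|y|)) with id_X <= 1_X and 1_X o 1_X <= 1_X,
   where composition is (psi o phi)(x,z) = \/_y (psi(y,z)/|y|) & phi(x,y). *)
Record QPreord := {
  qpcar :> Type;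
  qdeg : qpcar -> Q;
  qrel : qpcar -> qpcar -> Q;
  qrel_valid : forall x y, inDQ (qrel x y) (qdeg x) (qdeg y);
  qrel_refl : forall x, qle (qdeg x) (qrel x x);
  qrel_trans : forall x z,
      qle (qsup (fun c => exists y, c = qmul (qrdiv (qrel y z) (qdeg y)) (qrel x y)))
          (qrel x z)
}.

(* A potential lower Q-subset: a Q-relation mu from X to 1_q
   (mu x \in DQ(|x|, q)) with mu o 1_X <= mu.  Its extent is |mu| = q. *)
Record PEl (X : QPreord) := {
  pdeg : Q;
  pfun : X -> Q;
  pvalid : forall x, inDQ (pfun x) (qdeg x) pdeg;
  plower : forall x,
      qle (qsup (fun c => exists y, c = qmul (qrdiv (pfun y) (qdeg y)) (qrel x y)))
          (pfun x)
}.

(* 1_{PX}(mu, mu') = mu' <- mu : the largest Q-relation v from 1_{|mu|} to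
   1_{|mu'|} (i.e. v \in DQ(|mu|,|mu'|)) with v o mu <= mu', where
   (v o mu)(x) = (v/|mu|) & mu(x). *)
Definition PXrel (X : QPreord) (m m' : PEl X) : Q :=
  qsup (fun v => inDQ v (pdeg m) (pdeg m') /\
         forall x, qle (qmul (qrdiv v (pdeg m)) (pfun m x)) (pfun m' x)).

Definition PXle (X : QPreord) (m m' : PEl X) : Prop :=
  pdeg m = pdeg m' /\ qle (pdeg m) (PXrel m m').

Definition PQmono (X Y : QPreord) (f : PEl X -> PEl Y) : Prop :=
  (forall m, pdeg (f m) = pdeg m) /\
  (forall m m', qle (PXrel m m') (PXrel (f m) (f m'))).

Definition PQgalois (X Y : QPreord) (f : PEl X -> PEl Y) (g : PEl Y -> PEl X) : Prop :=
  (forall m, qle (pdeg m) (PXrel m (g (f m)))) /\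
  (forall n, qle (pdeg n) (PXrel (f (g n)) n)).

Definition PLeftAdjoint (X Y : QPreord) (f : PEl X -> PEl Y) : Prop :=
  exists g : PEl Y -> PEl X, forall m n, PXle (f m) n <-> PXle m (g n).

Definition ucomp (X : QPreord) (u : Q) (m : PEl X) : X -> Q :=
  fun x => qmul (qrdiv u (pdeg m)) (pfun m x).

Definition yoneda (X : QPreord) (x : X) : PEl X :=
  {| pdeg := qdeg x;
     pfun := fun z => qrel z x;
     pvalid := fun z => qrel_valid z x;
     plower := fun z => qrel_trans z x |}.

End QDefs.

(* By the Yoneda lemma, s <= (g n)(x) iff the representable s o y_X x lies below
   g n, so if f commutes with u o - on representables, an underlying right
   adjoint g of f satisfies g n x = n ↙ f (y_X x).  This makes g
   Q-order-preserving, because (n' ↙ n) o (n ↙ f (y_X x)) <= n' ↙ f (y_X x).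
   Conversely, for a Q-Galois connection f -| g, u o f mu <= f (u o mu) since f
   preserves u <= (u o mu) ↙ mu, and f (u o mu) <= u o f mu transposes to
   u o mu <= g (u o f mu), which follows from the same argument for g and the
   unit mu <= g (f mu). *)
From Stdlib Require Import Setoid.
Set Implicit Arguments.
Unset Strict Implicit.

Section QuantaleLemmas.
Variable Q : Quantale.

Local Notation "a ⊑ b" := (@qle Q a b) (at level 70).
Local Notation "a ⊗ b" := (@qmul Q a b) (at level 40, left associativity).
Local Notation "a // b" := (@qrdiv Q a b) (at level 35).
Local Notation "a \\ b" := (@qldiv Q a b) (at level 35).

Lemma qsup_pair (a b : Q) : a ⊑ b -> qsup (fun z => z = a \/ z = b) = b.
Proof.
  intro Hab. apply qle_antisym.
  - apply qsup_least. intros z [-> | ->]; [exact Hab | apply qle_refl].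
  - apply qsup_ub. right. reflexivity.
Qed.

Lemma qmul_monol (a b c : Q) : a ⊑ b -> a ⊗ c ⊑ b ⊗ c.
Proof.
  intro Hab. rewrite <- (qsup_pair Hab), qmul_supl.
  apply qsup_ub. exists a. auto.
Qed.

Lemma qmul_monor (a b c : Q) : a ⊑ b -> c ⊗ a ⊑ c ⊗ b.
Proof.
  intro Hab. rewrite <- (qsup_pair Hab), qmul_supr.
  apply qsup_ub. exists a. auto.
Qed.

Lemma qrdiv_cancel (r q : Q) : (r // q) ⊗ q ⊑ r.
Proof.
  unfold qrdiv. rewrite qmul_supl. apply qsup_least.
  intros c [a [Ha ->]]. exact Ha.
Qed.

Lemma qldiv_cancel (p r : Q) : p ⊗ (p \\ r) ⊑ r.
Proof.
  unfold qldiv. rewrite qmul_supr. apply qsup_least.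
  intros c [a [Ha ->]]. exact Ha.
Qed.

Lemma qrdiv_adj (a q r : Q) : a ⊗ q ⊑ r <-> a ⊑ r // q.
Proof.
  split; intro H.
  - apply qsup_ub. exact H.
  - eapply qle_trans; [apply qmul_monol, H | apply qrdiv_cancel].
Qed.

Lemma qldiv_adj (p a r : Q) : p ⊗ a ⊑ r <-> a ⊑ p \\ r.
Proof.
  split; intro H.
  - apply (@qsup_ub Q (fun b => p ⊗ b ⊑ r)). exact H.
  - eapply qle_trans; [apply qmul_monor, H | apply qldiv_cancel].
Qed.

Lemma qrdiv_mono (a b p : Q) : a ⊑ b -> a // p ⊑ b // p.
Proof. intro H. apply -> qrdiv_adj. eapply qle_trans; [apply qrdiv_cancel | exact H]. Qed.

Lemma qldiv_mono (a b p : Q) : a ⊑ b -> p \\ a ⊑ p \\ b.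
Proof. intro H. apply -> qldiv_adj. eapply qle_trans; [apply qldiv_cancel | exact H]. Qed.

Lemma inDQ_id (p : Q) : inDQ p p p.
Proof.
  split; apply qle_antisym.
  - apply qrdiv_cancel.
  - rewrite <- (qmul1l p) at 1. apply qmul_monol; apply -> qrdiv_adj. rewrite qmul1l. apply qle_refl.
  - rewrite <- (qmulr1 p) at 1. apply qmul_monor; apply -> qldiv_adj. rewrite qmulr1. apply qle_refl.
  - apply qldiv_cancel.
Qed.

Lemma inDQ_sup (S : Q -> Prop) (p q : Q) :
  (forall v, S v -> inDQ v p q) -> inDQ (qsup S) p q.
Proof.
  intro HS. split; apply qle_antisym.
  - apply qrdiv_cancel.
  - apply qsup_least. intros v Hv. rewrite <- (proj1 (HS v Hv)) at 1.
    apply qmul_monol, qrdiv_mono, qsup_ub, Hv.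
  - apply qsup_least. intros v Hv. rewrite (proj2 (HS v Hv)) at 1.
    apply qmul_monor, qldiv_mono, qsup_ub, Hv.
  - apply qldiv_cancel.
Qed.

(* The two halves of [inDQ] make the two ways of composing Q-relations agree. *)
Lemma inDQ_compE (a b c w s : Q) :
  inDQ w b c -> inDQ s a b -> (w // b) ⊗ s = w ⊗ (b \\ s).
Proof. intros [Hw _] [_ Hs]. rewrite Hs at 1. rewrite qmulA, Hw. reflexivity. Qed.

Lemma inDQ_comp (a b c w s : Q) :
  inDQ w b c -> inDQ s a b -> inDQ ((w // b) ⊗ s) a c.
Proof.
  intros Hw Hs. split; apply qle_antisym.
  - apply qrdiv_cancel.
  - destruct Hs as [Hs _]. rewrite <- Hs at 1. rewrite qmulA.
    apply qmul_monol; apply -> qrdiv_adj. rewrite <- qmulA, Hs. apply qle_refl.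
  - rewrite (inDQ_compE Hw Hs). destruct Hw as [_ Hw].
    rewrite Hw at 1. rewrite <- qmulA.
    apply qmul_monor; apply -> qldiv_adj. rewrite qmulA, <- Hw. apply qle_refl.
  - apply qldiv_cancel.
Qed.

End QuantaleLemmas.

Section Powerset.
Variable Q : Quantale.
Variable X : QPreord Q.

Local Notation "a ⊑ b" := (@qle Q a b) (at level 70).
Local Notation "a ⊗ b" := (@qmul Q a b) (at level 40, left associativity).
Local Notation "a // b" := (@qrdiv Q a b) (at level 35).
Local Notation "a \\ b" := (@qldiv Q a b) (at level 35).

Lemma ucompE (m : PEl X) (q v : Q) (x : X) :
  inDQ v (pdeg m) q -> ucomp v m x = v ⊗ (pdeg m \\ pfun m x).
Proof. intro Hv. exact (inDQ_compE Hv (pvalid m x)). Qed.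

Lemma ucomp_id (m : PEl X) (x : X) : ucomp (pdeg m) m x = pfun m x.
Proof. rewrite (ucompE _ (inDQ_id (pdeg m))). symmetry. apply (pvalid m x). Qed.

Lemma ucomp_mono (m : PEl X) (v w : Q) (x : X) : v ⊑ w -> ucomp v m x ⊑ ucomp w m x.
Proof. intro Hvw. apply qmul_monol, qrdiv_mono, Hvw. Qed.

Lemma ucomp_comp (m : PEl X) (q r v w : Q) (x : X) :
  inDQ v (pdeg m) q -> inDQ w q r -> ucomp ((w // q) ⊗ v) m x = (w // q) ⊗ ucomp v m x.
Proof.
  intros Hv Hw. rewrite (ucompE _ (inDQ_comp Hw Hv)), (ucompE _ Hv), qmulA.
  reflexivity.
Qed.

Lemma inDQ_ucomp (m : PEl X) (q u : Q) :
  inDQ u (pdeg m) q -> forall x, inDQ (ucomp u m x) (qdeg x) q.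
Proof. intros Hu x. exact (inDQ_comp Hu (pvalid m x)). Qed.

Lemma ucomp_lower (m : PEl X) (q u : Q) (Hu : inDQ u (pdeg m) q) (x : X) :
  qsup (fun c => exists y, c = (ucomp u m y // qdeg y) ⊗ qrel x y) ⊑ ucomp u m x.
Proof.
  apply qsup_least. intros c [y ->].
  rewrite (inDQ_compE (inDQ_ucomp Hu y) (qrel_valid x y)).
  unfold ucomp. rewrite <- qmulA, <- (inDQ_compE (pvalid m y) (qrel_valid x y)).
  apply qmul_monor. eapply qle_trans; [| apply plower].
  apply qsup_ub. exists y. reflexivity.
Qed.

Definition ucomp_el (m : PEl X) (q u : Q) (Hu : inDQ u (pdeg m) q) : PEl X :=
  @Build_PEl Q X q (ucomp u m) (inDQ_ucomp Hu) (ucomp_lower Hu).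

Lemma inDQ_PXrel (m m' : PEl X) : inDQ (PXrel m m') (pdeg m) (pdeg m').
Proof. apply inDQ_sup. intros v [Hv _]. exact Hv. Qed.

Lemma ucomp_PXrel_le (m m' : PEl X) (x : X) : ucomp (PXrel m m') m x ⊑ pfun m' x.
Proof.
  rewrite (ucompE _ (inDQ_PXrel m m')). unfold PXrel at 1. rewrite qmul_supl.
  apply qsup_least. intros c [v [[Hv Hvm] ->]].
  rewrite <- (ucompE _ Hv). apply Hvm.
Qed.

Lemma ucomp_le_of_le_PXrel (m m' : PEl X) (v : Q) (x : X) :
  v ⊑ PXrel m m' -> ucomp v m x ⊑ pfun m' x.
Proof. intro Hv. eapply qle_trans; [apply ucomp_mono, Hv | apply ucomp_PXrel_le]. Qed.

Lemma le_PXrel_of_ucomp_le (m m' : PEl X) (v : Q) :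
  inDQ v (pdeg m) (pdeg m') -> (forall x, ucomp v m x ⊑ pfun m' x) -> v ⊑ PXrel m m'.
Proof. intros Hv Hvm. apply qsup_ub. split; assumption. Qed.

Lemma PXrel_trans (a b c : PEl X) :
  (PXrel b c // pdeg b) ⊗ PXrel a b ⊑ PXrel a c.
Proof.
  apply le_PXrel_of_ucomp_le; [exact (inDQ_comp (inDQ_PXrel b c) (inDQ_PXrel a b)) |].
  intro x. rewrite (ucomp_comp _ (inDQ_PXrel a b) (inDQ_PXrel b c)).
  eapply qle_trans; [apply qmul_monor, ucomp_PXrel_le | apply ucomp_PXrel_le].
Qed.

Lemma PXle_pointwise (m m' : PEl X) :
  PXle m m' <-> pdeg m = pdeg m' /\ forall x, pfun m x ⊑ pfun m' x.
Proof.
  split; intros [Hd Hle]; split; try exact Hd.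
  - intro x. rewrite <- ucomp_id. apply ucomp_le_of_le_PXrel, Hle.
  - apply le_PXrel_of_ucomp_le.
    + rewrite <- Hd. apply inDQ_id.
    + intro x. rewrite ucomp_id. apply Hle.
Qed.

Lemma PXle_refl (m : PEl X) : PXle m m.
Proof. apply PXle_pointwise. split; [reflexivity | intro; apply qle_refl]. Qed.

Lemma PXle_trans (a b c : PEl X) : PXle a b -> PXle b c -> PXle a c.
Proof.
  rewrite !PXle_pointwise. intros [Hab Hle1] [Hbc Hle2].
  split; [congruence | intro x; eapply qle_trans; [apply Hle1 | apply Hle2]].
Qed.

Lemma PXrel_le_pre (a b c : PEl X) : PXle a b -> PXrel b c ⊑ PXrel a c.
Proof.
  intros [Hd Hle]. eapply qle_trans; [| apply PXrel_trans].
  rewrite <- (proj1 (inDQ_PXrel b c)) at 1. apply qmul_monor.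
  rewrite <- Hd. exact Hle.
Qed.

Lemma yoneda_ucomp_le (m : PEl X) (x : X) (s : Q) :
  inDQ s (qdeg x) (pdeg m) ->
  s ⊑ pfun m x <-> forall z, ucomp s (yoneda x) z ⊑ pfun m z.
Proof.
  intro Hs. split.
  - intros Hsm z. eapply qle_trans; [apply qmul_monol, qrdiv_mono, Hsm |].
    eapply qle_trans; [| apply plower]. apply qsup_ub. exists x. reflexivity.
  - intro Hle. rewrite <- (proj1 Hs). eapply qle_trans; [| apply (Hle x)].
    apply qmul_monor, qrel_refl.
Qed.

End Powerset.

Definition commutes_with_ucomp (Q : Quantale) (X Y : QPreord Q) (f : PEl X -> PEl Y) : Prop :=
  forall (m : PEl X) (q u : Q), inDQ u (pdeg m) q ->
    forall hv hl y, pfun (f (@Build_PEl Q X q (ucomp u m) hv hl)) y = ucomp u (f m) y.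

Definition commutes_with_ucomp_yoneda (Q : Quantale) (X Y : QPreord Q)
    (f : PEl X -> PEl Y) : Prop :=
  forall (x : X) (q u : Q), inDQ u (qdeg x) q ->
    forall hv hl y,
      pfun (f (@Build_PEl Q X q (ucomp u (yoneda x)) hv hl)) y = ucomp u (f (yoneda x)) y.

Lemma commutes_with_ucomp_yonedaW (Q : Quantale) (X Y : QPreord Q) (f : PEl X -> PEl Y) :
  commutes_with_ucomp f -> commutes_with_ucomp_yoneda f.
Proof. intros Hf x. exact (Hf (yoneda x)). Qed.

Lemma PQmono_PXle (Q : Quantale) (X Y : QPreord Q) (h : PEl X -> PEl Y) (a b : PEl X) :
  PQmono h -> PXle a b -> PXle (h a) (h b).
Proof.
  intros [Hd Hr] [Hab Hle]. split; [rewrite !Hd; exact Hab | rewrite Hd].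
  eapply qle_trans; [exact Hle | apply Hr].
Qed.

Section Adjunctions.
Variable Q : Quantale.
Variables X Y : QPreord Q.
Variable f : PEl X -> PEl Y.
Variable g : PEl Y -> PEl X.
Hypothesis hf : PQmono f.

Local Notation "a ⊑ b" := (@qle Q a b) (at level 70).

Lemma PQgalois_adjunction :
  PQmono g -> PQgalois f g -> forall m n, PXle (f m) n <-> PXle m (g n).
Proof.
  intros hg [Hunit Hcounit].
  assert (Hunit' : forall m, PXle m (g (f m))).
  { intro m. split; [rewrite (proj1 hg), (proj1 hf); reflexivity | apply Hunit]. }
  assert (Hcounit' : forall n, PXle (f (g n)) n).
  { intro n. assert (Hd : pdeg (f (g n)) = pdeg n) by (rewrite (proj1 hf); apply hg).
    split; [exact Hd | rewrite Hd; apply Hcounit]. }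
  intros m n. split; intro H.
  - eapply PXle_trans; [apply Hunit' | apply (PQmono_PXle hg H)].
  - eapply PXle_trans; [apply (PQmono_PXle hf H) | apply Hcounit'].
Qed.

Section UnderlyingAdjunction.
Hypothesis hadj : forall m n, PXle (f m) n <-> PXle m (g n).

Lemma adjunction_unit (m : PEl X) : PXle m (g (f m)).
Proof. apply hadj, PXle_refl. Qed.

Lemma adjunction_counit (n : PEl Y) : PXle (f (g n)) n.
Proof. apply hadj, PXle_refl. Qed.

Lemma adjoint_pdeg (n : PEl Y) : pdeg (g n) = pdeg n.
Proof. rewrite <- (proj1 (adjunction_counit n)), (proj1 hf). reflexivity. Qed.

Lemma adjunction_PQgalois : PQgalois f g.
Proof.
  split.
  - intro m. apply adjunction_unit.
  - intro n. rewrite <- (proj1 (adjunction_counit n)). apply adjunction_counit.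
Qed.

Lemma PQmono_adjoint_commutes_with_ucomp : PQmono g -> commutes_with_ucomp f.
Proof.
  intros hg m q u Hu hv hl y.
  set (T := @Build_PEl Q X q (ucomp u m) hv hl).
  assert (Hu' : inDQ u (pdeg (f m)) q) by (rewrite (proj1 hf); exact Hu).
  set (U := ucomp_el Hu').
  apply qle_antisym.
  - assert (HTU : PXle T (g U)).
    { apply PXle_pointwise. split; [symmetry; apply hg |].
      intro x. apply ucomp_le_of_le_PXrel.
      eapply qle_trans; [| apply (PXrel_le_pre _ (adjunction_unit m))].
      eapply qle_trans; [| apply (proj2 hg)].
      apply le_PXrel_of_ucomp_le; [exact Hu' | intro; apply qle_refl]. }
    apply hadj, PXle_pointwise in HTU. apply (proj2 HTU).
  - apply ucomp_le_of_le_PXrel. eapply qle_trans; [| apply (proj2 hf)].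
    apply le_PXrel_of_ucomp_le; [exact Hu | intro; apply qle_refl].
Qed.

Hypothesis hcomm : commutes_with_ucomp_yoneda f.

Lemma adjoint_representable (n : PEl Y) (x : X) (s : Q) :
  inDQ s (qdeg x) (pdeg n) ->
  s ⊑ pfun (g n) x <-> s ⊑ PXrel (f (yoneda x)) n.
Proof.
  intro Hs.
  assert (Hdx : pdeg (f (yoneda x)) = qdeg x) by apply hf.
  assert (Hsg : inDQ s (qdeg x) (pdeg (g n))) by (rewrite adjoint_pdeg; exact Hs).
  rewrite (yoneda_ucomp_le Hsg).
  transitivity (PXle (ucomp_el (m := yoneda x) Hs) (g n)).
  { rewrite PXle_pointwise. simpl. rewrite adjoint_pdeg. tauto. }
  pose proof (hcomm Hs (inDQ_ucomp (m := yoneda x) Hs) (ucomp_lower (m := yoneda x) Hs))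
    as Hfs.
  rewrite <- hadj, PXle_pointwise, (proj1 hf). simpl.
  split.
  - intros [_ Hle]. apply le_PXrel_of_ucomp_le; [rewrite Hdx; exact Hs |].
    intro y. rewrite <- Hfs. apply Hle.
  - intro Hle. split; [reflexivity |].
    intro y. rewrite Hfs. apply ucomp_le_of_le_PXrel, Hle.
Qed.

Lemma adjoint_PQmono : PQmono g.
Proof.
  split; [exact adjoint_pdeg |]. intros n n'.
  assert (Hw : inDQ (PXrel n n') (pdeg (g n)) (pdeg (g n'))).
  { rewrite !adjoint_pdeg. apply inDQ_PXrel. }
  apply le_PXrel_of_ucomp_le; [exact Hw |]. intro x.
  assert (Hs : inDQ (pfun (g n) x) (qdeg x) (pdeg n)).
  { rewrite <- adjoint_pdeg. apply pvalid. }
  unfold ucomp. rewrite adjoint_pdeg.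
  apply adjoint_representable; [exact (inDQ_comp (inDQ_PXrel n n') Hs) |].
  eapply qle_trans; [| apply PXrel_trans].
  apply qmul_monor, adjoint_representable; [exact Hs | apply qle_refl].
Qed.

End UnderlyingAdjunction.
End Adjunctions.

Theorem proposition4p15 (Q : Quantale) (X Y : QPreord Q)
    (f : PEl X -> PEl Y) (hf : PQmono f) :
  ((exists g : PEl Y -> PEl X, PQmono g /\ PQgalois f g) <->
   (PLeftAdjoint f /\
    forall (m : PEl X) (q u : Q), inDQ u (pdeg m) q ->
      forall hv hl,
        forall y, pfun (f (@Build_PEl Q X q (ucomp u m) hv hl)) y
                  = ucomp u (f m) y)) /\
  ((exists g : PEl Y -> PEl X, PQmono g /\ PQgalois f g) <->
   (PLeftAdjoint f /\
    forall (x : X) (q u : Q), inDQ u (qdeg x) q ->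
      forall hv hl,
        forall y, pfun (f (@Build_PEl Q X q (ucomp u (yoneda x)) hv hl)) y
                  = ucomp u (f (yoneda x)) y)).
Proof.
  assert (i_ii : (exists g, PQmono g /\ PQgalois f g) ->
                 PLeftAdjoint f /\ commutes_with_ucomp f).
  { intros [g [hg Hfg]]. pose proof (PQgalois_adjunction hf hg Hfg) as hadj.
    split; [exists g; exact hadj | exact (PQmono_adjoint_commutes_with_ucomp hf hadj hg)]. }
  assert (iii_i : PLeftAdjoint f /\ commutes_with_ucomp_yoneda f ->
                  exists g, PQmono g /\ PQgalois f g).
  { intros [[g hadj] hcomm]. exists g.
    split; [exact (adjoint_PQmono hf hadj hcomm) | exact (adjunction_PQgalois hadj)]. }
  split; split.
  - exact i_ii.
  - intros [Hadj Hcomm]. apply iii_i.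
    split; [exact Hadj | exact (commutes_with_ucomp_yonedaW Hcomm)].
  - intro H. destruct (i_ii H) as [Hadj Hcomm].
    split; [exact Hadj | exact (commutes_with_ucomp_yonedaW Hcomm)].
  - exact iii_i.
Qed.
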